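(* Let $J=(a,b)\subseteq\mathbb R$ be an open interval (possibly unbounded) and let $A:J\to\mathbb R$ be differentiable with $|A'(x)-A'(y)|\le M|x-y|$ for all $x,y\in J$, for some constant $M>0$. Then $c^2(\mathbf z)\le 8M^2$ for every three-tuple $\mathbf z$ of distinct points on $\Gamma=\{x+iA(x):x\in J\}$.
   Context: The Menger curvature $c(\mathbf z)$ of three points $z_1,z_2,z_3\in\mathbb C$ is $0$ if they are collinear and otherwise the reciprocal of the radius of the unique circle through them. *)

From Stdlib Require Import Reals ClassicalEpsilon.
From Coquelicot Require Import Coquelicot.
Open Scope R_scope.

Definition collinear (z1 z2 z3 : C) : Prop :=
  exists (p d : C), d <> 0%C /\
    (exists t : R, z1 = (p + RtoC t * d)%C) /\
    (exists t : R, z2 = (p + RtoC t * d)%C) /\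
    (exists t : R, z3 = (p + RtoC t * d)%C).

Definition is_circumradius (z1 z2 z3 : C) (r : R) : Prop :=
  exists w : C, Cmod (z1 - w) = r /\ Cmod (z2 - w) = r /\ Cmod (z3 - w) = r.

Definition circumradius (z1 z2 z3 : C) : R :=
  epsilon (inhabits 0) (is_circumradius z1 z2 z3).

Definition menger_curvature (z1 z2 z3 : C) : R :=
  match excluded_middle_informative (collinear z1 z2 z3) with
  | left _ => 0
  | right _ => / circumradius z1 z2 z3
  end.

Definition in_open_interval (a b : Rbar) (x : R) : Prop :=
  Rbar_lt a x /\ Rbar_lt x b.

(* Write the three points as [(x_i, A x_i)] and let [D] be twice their signed
   area.  The circumradius [r] satisfies [4 D^2 r^2 = |z2-z1|^2 |z3-z1|^2 |z3-z2|^2],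
   and each squared side length dominates the square of its horizontal
   component, so [c^2 = 1/r^2 <= 4 D^2 / ((x2-x1)(x3-x1)(x3-x2))^2].  For
   [x1 < x2 < x3] the mean value theorem on [[x1,x2]] and [[x2,x3]] gives
   [D = (x2-x1)(x3-x2)(A'(e) - A'(c))] with [c <= x2 <= e], and the Lipschitz
   bound [|A'(e) - A'(c)| <= M (x3-x1)] yields [c^2 <= 4 M^2 <= 8 M^2]. *)
From Stdlib Require Import Reals Lra Psatz ClassicalEpsilon.
From Coquelicot Require Import Coquelicot.
Open Scope R_scope.

Definition cross (z1 z2 z3 : C) : R :=
  (fst z2 - fst z1) * (snd z3 - snd z1) - (fst z3 - fst z1) * (snd z2 - snd z1).

Definition xgap_prod (x1 x2 x3 : R) : R := (x2 - x1) * (x3 - x1) * (x3 - x2).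

Lemma cross_swap12 z1 z2 z3 : cross z2 z1 z3 = - cross z1 z2 z3.
Proof. unfold cross; ring. Qed.

Lemma cross_swap23 z1 z2 z3 : cross z1 z3 z2 = - cross z1 z2 z3.
Proof. unfold cross; ring. Qed.

Lemma xgap_prod_swap12 x1 x2 x3 : xgap_prod x2 x1 x3 = - xgap_prod x1 x2 x3.
Proof. unfold xgap_prod; ring. Qed.

Lemma xgap_prod_swap23 x1 x2 x3 : xgap_prod x1 x3 x2 = - xgap_prod x1 x2 x3.
Proof. unfold xgap_prod; ring. Qed.

Lemma distinct3_sorted_ind (P : R -> R -> R -> Prop) :
  (forall x y z, P x y z -> P y x z) ->
  (forall x y z, P x y z -> P x z y) ->
  (forall x y z, x < y < z -> P x y z) ->
  forall x y z, x <> y -> x <> z -> y <> z -> P x y z.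
Proof.
  intros S12 S23 Hs x y z nxy nxz nyz.
  destruct (Rlt_or_le x y), (Rlt_or_le y z), (Rlt_or_le x z); try lra.
  - apply Hs; lra.
  - apply S23, Hs; lra.
  - apply S23, S12, Hs; lra.
  - apply S12, Hs; lra.
  - apply S12, S23, Hs; lra.
  - apply S12, S23, S12, Hs; lra.
Qed.

Lemma in_open_interval_between (a b : Rbar) x y z :
  in_open_interval a b x -> in_open_interval a b z -> x <= y <= z ->
  in_open_interval a b y.
Proof. unfold in_open_interval; destruct a, b; simpl; intuition lra. Qed.

Section GraphBound.

Variables (a b : Rbar) (A : R -> R) (M : R).
Let J := in_open_interval a b.
Hypothesis A_derivable : forall x, J x -> ex_derive A x.
Hypothesis A'_lipschitz : forall x y, J x -> J y ->
  Rabs (Derive A x - Derive A y) <= M * Rabs (x - y).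

Lemma MVT_open_interval x1 x2 : J x1 -> J x2 -> x1 < x2 ->
  exists c, x1 <= c <= x2 /\ A x2 - A x1 = Derive A c * (x2 - x1).
Proof.
  intros J1 J2 lt12.
  assert (J12 : forall x, Rmin x1 x2 <= x <= Rmax x1 x2 -> J x).
  { rewrite Rmin_left, Rmax_right by lra.
    intros x Hx; exact (in_open_interval_between a b x1 x x2 J1 J2 Hx). }
  destruct (MVT_gen A x1 x2 (Derive A)) as [c [Hc E]].
  - intros x Hx; apply Derive_correct, A_derivable, J12; lra.
  - intros x Hx; apply continuity_pt_filterlim.
    apply (ex_derive_continuous (K := R_AbsRing) (V := R_NormedModule)).
    apply A_derivable, J12; lra.
  - rewrite Rmin_left, Rmax_right in Hc by lra.
    exists c; split; assumption.
Qed.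

Lemma graph_cross_le_sorted x1 x2 x3 : J x1 -> J x2 -> J x3 -> x1 < x2 < x3 ->
  Rabs (cross (x1, A x1) (x2, A x2) (x3, A x3)) <= M * Rabs (xgap_prod x1 x2 x3).
Proof.
  intros J1 J2 J3 [lt12 lt23].
  destruct (MVT_open_interval x1 x2 J1 J2 lt12) as [c [Hc Ec]].
  destruct (MVT_open_interval x2 x3 J2 J3 lt23) as [e [He Ee]].
  assert (Jc : J c) by exact (in_open_interval_between a b x1 c x2 J1 J2 Hc).
  assert (Je : J e) by exact (in_open_interval_between a b x2 e x3 J2 J3 He).
  pose proof (A'_lipschitz e c Je Jc) as Lip.
  rewrite (Rabs_right (e - c)) in Lip by lra.
  assert (cross_mvt : cross (x1, A x1) (x2, A x2) (x3, A x3) =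
      (x2 - x1) * (x3 - x2) * (Derive A e - Derive A c)).
  { unfold cross; simpl.
    replace (A x3 - A x1) with ((A x3 - A x2) + (A x2 - A x1)) by ring.
    rewrite Ee, Ec; ring. }
  rewrite cross_mvt; unfold xgap_prod.
  rewrite !Rabs_mult, (Rabs_right (x2 - x1)), (Rabs_right (x3 - x1)),
    (Rabs_right (x3 - x2)) by lra.
  assert (Hpos : 0 <= (x2 - x1) * (x3 - x2)) by nra.
  assert (M_nonneg : 0 <= M).
  { pose proof (A'_lipschitz x1 x2 J1 J2) as L12.
    pose proof (Rabs_pos (Derive A x1 - Derive A x2)).
    rewrite (Rabs_left (x1 - x2)) in L12 by lra; nra. }
  assert (Hs : Rabs (Derive A e - Derive A c) <= M * (x3 - x1)) by nra.
  pose proof (Rmult_le_compat_l _ _ _ Hpos Hs); nra.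
Qed.

Lemma graph_cross_le x1 x2 x3 : J x1 -> J x2 -> J x3 ->
  x1 <> x2 -> x1 <> x3 -> x2 <> x3 ->
  Rabs (cross (x1, A x1) (x2, A x2) (x3, A x3)) <= M * Rabs (xgap_prod x1 x2 x3).
Proof.
  intros J1 J2 J3 n12 n13 n23; revert J1 J2 J3.
  apply (distinct3_sorted_ind (fun x1 x2 x3 => J x1 -> J x2 -> J x3 ->
    Rabs (cross (x1, A x1) (x2, A x2) (x3, A x3)) <= M * Rabs (xgap_prod x1 x2 x3)));
    [| | | assumption..].
  - intros x y z H Jy Jx Jz.
    rewrite cross_swap12, xgap_prod_swap12, !Rabs_Ropp; auto.
  - intros x y z H Jx Jz Jy.
    rewrite cross_swap23, xgap_prod_swap23, !Rabs_Ropp; auto.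
  - intros x y z Hs Jx Jy Jz; exact (graph_cross_le_sorted x y z Jx Jy Jz Hs).
Qed.

End GraphBound.

Lemma Cmod_sub_sq (z w : C) :
  Cmod (z - w) ^ 2 = (fst z - fst w) ^ 2 + (snd z - snd w) ^ 2.
Proof.
  destruct z as [p q], w as [s t]; unfold Cmod.
  rewrite pow2_sqrt by (apply Rplus_le_le_0_compat; apply pow2_ge_0).
  simpl; ring.
Qed.

Lemma cross_eq0_collinear x1 x2 x3 y1 y2 y3 : x1 <> x2 ->
  cross (x1, y1) (x2, y2) (x3, y3) = 0 -> collinear (x1, y1) (x2, y2) (x3, y3).
Proof.
  unfold cross; simpl; intros n12 D0.
  exists (x1, y1), (x2 - x1, y2 - y1); split.
  { intro h; apply (f_equal fst) in h; simpl in h; lra. }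
  split; [exists 0 | split; [exists 1 | exists ((x3 - x1) / (x2 - x1))]];
    apply injective_projections; simpl; try ring.
  - field; lra.
  - assert (x2 - x1 <> 0) by lra.
    field_simplify_eq; [lra | assumption].
Qed.

(* The circumcentre solves the two linear equations
   [2 <z_i - z1, w - z1> = |z_i - z1|^2], [i = 2, 3], by Cramer's rule. *)
Lemma ex_circumradius z1 z2 z3 : cross z1 z2 z3 <> 0 ->
  exists r, is_circumradius z1 z2 z3 r.
Proof.
  destruct z1 as [x1 y1], z2 as [x2 y2], z3 as [x3 y3]; unfold cross; simpl.
  set (D := _ - _); intro D0.
  set (U := (x2 - x1) ^ 2 + (y2 - y1) ^ 2); set (V := (x3 - x1) ^ 2 + (y3 - y1) ^ 2).
  set (w := (x1 + (U * (y3 - y1) - V * (y2 - y1)) / (2 * D),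
             y1 + (V * (x2 - x1) - U * (x3 - x1)) / (2 * D)) : C).
  exists (Cmod ((x1, y1) - w)), w; split; [reflexivity | split];
    unfold Cmod; f_equal; simpl; unfold U, V, D in *; field; exact D0.
Qed.

(* [u], [v] are [z2 - z1], [z3 - z1] and [p] is the centre minus [z1];
   the hypotheses say that [z2], [z3] are as far from the centre as [z1]. *)
Lemma circle_chords_identity ux uy vx vy px py :
  ux ^ 2 + uy ^ 2 = 2 * (ux * px + uy * py) ->
  vx ^ 2 + vy ^ 2 = 2 * (vx * px + vy * py) ->
  4 * (ux * vy - vx * uy) ^ 2 * (px ^ 2 + py ^ 2) =
    (ux ^ 2 + uy ^ 2) * (vx ^ 2 + vy ^ 2) * ((vx - ux) ^ 2 + (vy - uy) ^ 2).
Proof.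
  intros EU EV.
  (* Cramer's rule for [p]. *)
  assert (Cx : 2 * px * (ux * vy - vx * uy) =
                 (ux ^ 2 + uy ^ 2) * vy - (vx ^ 2 + vy ^ 2) * uy)
    by (rewrite EU, EV; ring).
  assert (Cy : 2 * py * (ux * vy - vx * uy) =
                 (vx ^ 2 + vy ^ 2) * ux - (ux ^ 2 + uy ^ 2) * vx)
    by (rewrite EU, EV; ring).
  replace (4 * (ux * vy - vx * uy) ^ 2 * (px ^ 2 + py ^ 2)) with
    ((2 * px * (ux * vy - vx * uy)) ^ 2 + (2 * py * (ux * vy - vx * uy)) ^ 2) by ring.
  rewrite Cx, Cy; ring.
Qed.

Lemma circumradius_sq_identity z1 z2 z3 w r :
  Cmod (z1 - w) = r -> Cmod (z2 - w) = r -> Cmod (z3 - w) = r ->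
  4 * cross z1 z2 z3 ^ 2 * r ^ 2 =
    Cmod (z2 - z1) ^ 2 * Cmod (z3 - z1) ^ 2 * Cmod (z3 - z2) ^ 2.
Proof.
  intros E1 E2 E3; subst r.
  apply (f_equal (fun t => t ^ 2)) in E2, E3.
  rewrite !Cmod_sub_sq in E2, E3; rewrite !Cmod_sub_sq.
  destruct z1 as [x1 y1], z2 as [x2 y2], z3 as [x3 y3], w as [p q].
  unfold cross; cbn [fst snd] in *.
  replace (x3 - x2) with ((x3 - x1) - (x2 - x1)) by ring.
  replace (y3 - y2) with ((y3 - y1) - (y2 - y1)) by ring.
  replace ((x1 - p) ^ 2 + (y1 - q) ^ 2) with ((p - x1) ^ 2 + (q - y1) ^ 2) by ring.
  apply circle_chords_identity; nra.
Qed.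

Lemma fst_sub_sq_le_Cmod_sq (z w : C) : (fst z - fst w) ^ 2 <= Cmod (z - w) ^ 2.
Proof. rewrite Cmod_sub_sq; pose proof (pow2_ge_0 (snd z - snd w)); lra. Qed.

Lemma inv_circumradius_sq_le z1 z2 z3 K r :
  let Q := xgap_prod (fst z1) (fst z2) (fst z3) in
  Q <> 0 -> Rabs (cross z1 z2 z3) <= K * Rabs Q ->
  is_circumradius z1 z2 z3 r -> (/ r) ^ 2 <= 4 * K ^ 2.
Proof.
  intros Q Q0 HK [w [E1 [E2 E3]]].
  pose proof (circumradius_sq_identity z1 z2 z3 w r E1 E2 E3) as Sides.
  set (P := Cmod (z2 - z1) ^ 2 * Cmod (z3 - z1) ^ 2 * Cmod (z3 - z2) ^ 2) in Sides.
  assert (Q_le_P : Q ^ 2 <= P).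
  { unfold Q, P, xgap_prod; rewrite !Rpow_mult_distr.
    pose proof (fst_sub_sq_le_Cmod_sq z2 z1); pose proof (fst_sub_sq_le_Cmod_sq z3 z1).
    pose proof (fst_sub_sq_le_Cmod_sq z3 z2).
    apply Rmult_le_compat;
      [apply Rmult_le_pos; apply pow2_ge_0 | apply pow2_ge_0 | | assumption].
    apply Rmult_le_compat; [apply pow2_ge_0 | apply pow2_ge_0 | assumption ..]. }
  assert (Q_pos : 0 < Q ^ 2) by (apply pow2_gt_0; exact Q0).
  assert (cross_sq : cross z1 z2 z3 ^ 2 <= K ^ 2 * Q ^ 2).
  { rewrite <- pow2_abs, <- (pow2_abs Q), <- Rpow_mult_distr.
    apply pow_incr; split; [apply Rabs_pos | exact HK]. }
  assert (r_pos : 0 < r ^ 2).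
  { destruct (Rle_lt_dec (r ^ 2) 0) as [h | h]; [| exact h].
    assert (r2_0 : r ^ 2 = 0) by (pose proof (pow2_ge_0 r); lra).
    rewrite r2_0, Rmult_0_r in Sides; lra. }
  (* [P = 4 D^2 r^2 <= 4 K^2 Q^2 r^2 <= 4 K^2 P r^2]. *)
  assert (one_le : 1 <= 4 * K ^ 2 * r ^ 2).
  { pose proof (pow2_ge_0 K); nra. }
  rewrite pow_inv.
  apply Rmult_le_reg_r with (r ^ 2); [exact r_pos |].
  rewrite Rinv_l by lra; lra.
Qed.

Lemma menger_curvature_sq_le z1 z2 z3 K :
  let Q := xgap_prod (fst z1) (fst z2) (fst z3) in
  Q <> 0 -> Rabs (cross z1 z2 z3) <= K * Rabs Q ->
  menger_curvature z1 z2 z3 ^ 2 <= 4 * K ^ 2.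
Proof.
  intros Q Q0 HK; unfold menger_curvature.
  destruct (excluded_middle_informative _) as [_ | noncol].
  { pose proof (pow2_ge_0 K); simpl; lra. }
  assert (cross0 : cross z1 z2 z3 <> 0).
  { destruct z1 as [x1 y1], z2 as [x2 y2], z3 as [x3 y3].
    intro D0; apply noncol, cross_eq0_collinear; [| exact D0].
    intro; subst x2; apply Q0; unfold Q, xgap_prod; simpl; ring. }
  apply (inv_circumradius_sq_le z1 z2 z3 K); [exact Q0 | exact HK |].
  exact (epsilon_spec (inhabits 0) _ (ex_circumradius z1 z2 z3 cross0)).
Qed.

Theorem lemma1p5 (a b : Rbar) (A : R -> R) (M : R) :
  0 < M ->
  (forall x, in_open_interval a b x -> ex_derive A x) ->
  (forall x y, in_open_interval a b x -> in_open_interval a b y ->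
     Rabs (Derive A x - Derive A y) <= M * Rabs (x - y)) ->
  forall z1 z2 z3 : C,
    (exists x, in_open_interval a b x /\ z1 = (x, A x)) ->
    (exists x, in_open_interval a b x /\ z2 = (x, A x)) ->
    (exists x, in_open_interval a b x /\ z3 = (x, A x)) ->
    z1 <> z2 -> z1 <> z3 -> z2 <> z3 ->
    (menger_curvature z1 z2 z3) ^ 2 <= 8 * M ^ 2.
Proof.
  intros HM HD HL z1 z2 z3 [x1 [J1 ->]] [x2 [J2 ->]] [x3 [J3 ->]] n12 n13 n23.
  assert (m12 : x1 <> x2) by (intros ->; exact (n12 eq_refl)).
  assert (m13 : x1 <> x3) by (intros ->; exact (n13 eq_refl)).
  assert (m23 : x2 <> x3) by (intros ->; exact (n23 eq_refl)).
  apply Rle_trans with (4 * M ^ 2); [| pose proof (pow2_ge_0 M); lra].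
  apply menger_curvature_sq_le; simpl.
  - unfold xgap_prod; repeat apply Rmult_integral_contrapositive_currified; lra.
  - exact (graph_cross_le a b A M HD HL x1 x2 x3 J1 J2 J3 m12 m13 m23).
Qed.
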